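(* Let $G=(V,E)$ be a $k$-uniform linear hypergraph with a vertex correspondence $\sigma$ and weighted lists of colours $(L,\mu)$ assigned to its vertices, where each list is finite. Let $\ell,n>0$ be such that (i) $\ell/n\ge 3e$ ($e$ Euler's number); (ii) $|L(v)|_\mu\ge\ell$ for all $v\in V$; (iii) $|N_{G,L,\sigma}(v,c)|_\mu\le n$ for all $v\in V$ and $c\in L(v)$. Then $G$ has an $(L,\sigma)$-colouring.
   Context: A hypergraph is $k$-uniform if every edge has exactly $k$ vertices, and linear if two distinct edges share at most one vertex; two distinct vertices are adjacent if they lie in a common edge. Colours are positive integers. A vertex correspondence $\sigma$ consists of permutations $\sigma_{u,v}$ of $\mathbb{N}$ for all ordered pairs of adjacent vertices $u,v$, with $\sigma_{v,u}=\sigma_{u,v}^{-1}$; $(u,c)$ blocks $(v,c')$ if $\sigma_{u,v}(c)=c'$. A weighted list assignment $(L,\mu)$ gives each vertex $v$ a list $L(v)\subseteq\mathbb{N}$ and weights $\mu(v)\colon L(v)\to[0,1]$, written $\mu(v,c)$; for a set $A$ of vertex–colour pairs, $|A|_\mu=\sum_{(v,c)\in A}\mu(v,c)$, and $|L(v)|_\mu=\sum_{c\in L(v)}\mu(v,c)$. An $(L,\sigma)$-colouring is $\gamma\colon V\to\mathbb{N}$ with $\gamma(v)\in L(v)$ for all $v$ such that $(v,\gamma(v))$ does not block $(u,\gamma(u))$ for all adjacent $u,v$. $N_{G,L,\sigma}(v,c)$ is the set of pairs $(w,c')$ with $w$ adjacent to $v$, $c'\in L(w)$, and $(w,c')$ blocking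 $(v,c)$. *)

From mathcomp Require Import all_boot all_order all_algebra.
From mathcomp Require Import reals sequences.
Set Implicit Arguments. Unset Strict Implicit. Unset Printing Implicit Defensive.
Import Order.TTheory GRing.Theory Num.Theory.
Local Open Scope ring_scope.

Definition uniform (V : finType) (k : nat) (E : {set {set V}}) : Prop :=
  forall e, e \in E -> #|e| = k.

Definition linear_hg (V : finType) (E : {set {set V}}) : Prop :=
  forall e f, e \in E -> f \in E -> e != f -> (#|e :&: f| <= 1)%N.

Definition adj (V : finType) (E : {set {set V}}) (u v : V) : bool :=
  (u != v) && [exists e in E, (u \in e) && (v \in e)].

(* Colours are natural numbers (a relabelling of the positive integers).
   sigma u v is the permutation sigma_{u,v}; only its values for adjacent
   u v matter. *)
Definition vertex_correspondence (V : finType) (E : {set {set V}})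
  (sigma : V -> V -> nat -> nat) : Prop :=
  forall u v, adj E u v ->
    bijective (sigma u v) /\ (forall c, sigma v u (sigma u v c) = c).

Definition blocks (V : finType) (sigma : V -> V -> nat -> nat)
  (u : V) (c : nat) (v : V) (c' : nat) : bool := sigma u v c == c'.

(* |L(v)|_mu, lists are duplicate-free sequences (finite sets) *)
Definition list_weight (R : realType) (V : finType) (L : V -> seq nat)
  (mu : V -> nat -> R) (v : V) : R :=
  \sum_(c <- L v) mu v c.

Definition nbhd_weight (R : realType) (V : finType) (E : {set {set V}})
  (sigma : V -> V -> nat -> nat) (L : V -> seq nat) (mu : V -> nat -> R)
  (v : V) (c : nat) : R :=
  \sum_(w | adj E w v) \sum_(c' <- L w | blocks sigma w c' v c) mu w c'.

Definition is_colouring (V : finType) (E : {set {set V}})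
  (sigma : V -> V -> nat -> nat) (L : V -> seq nat) (gamma : V -> nat) : Prop :=
  (forall v, gamma v \in L v) /\
  (forall u v, adj E u v -> ~~ blocks sigma v (gamma v) u (gamma u)).

From mathcomp Require Import all_boot all_order all_algebra.
From mathcomp Require Import reals sequences.
From mathcomp Require exp.
From mathcomp Require Import lra.
Set Implicit Arguments. Unset Strict Implicit. Unset Printing Implicit Defensive.
Import Order.TTheory GRing.Theory Num.Theory.
Local Open Scope ring_scope.

(* For U a set of vertices let Z(U) be the total weight of the proper
   colourings of U, a colouring gamma weighing prod_(v in U) mu(v, gamma v).
   By induction on |U|, ell Z(U \ u) <= 2 Z(U) for every u in U: a colouring
   of U \ u extends by c at u unless some neighbour w blocks (u, c), and by
   induction the colourings where w does so weigh at most
   mu(w, c') Z(U \ u \ w) <= mu(w, c') (2 / ell) Z(U \ u).  Summing over the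
   blocking pairs, at most (2 n / ell) Z(U \ u) <= Z(U \ u) / 2 is lost, since
   ell >= 3 e n >= 4 n; summing over c in L(u) then gives
   Z(U) >= |L(u)|_mu Z(U \ u) / 2 >= ell Z(U \ u) / 2.  Hence Z(V) > 0. *)

Lemma adjC (V : finType) (E : {set {set V}}) : symmetric (adj E).
Proof.
move=> a b; rewrite /adj eq_sym; congr (_ && _).
by apply/existsP/existsP => -[e /andP[eE /andP[ae be]]]; exists e; rewrite eE ae be.
Qed.

Lemma adjxx (V : finType) (E : {set {set V}}) : irreflexive (adj E).
Proof. by move=> a; rewrite /adj eqxx. Qed.

Lemma ler_sum_subpred (R : numDomainType) (I : Type) (r : seq I) (P Q : pred I)
    (F : I -> R) :
  (forall i, P i -> Q i) -> (forall i, Q i -> 0 <= F i) ->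
  \sum_(i <- r | P i) F i <= \sum_(i <- r | Q i) F i.
Proof.
move=> PQ F_ge0; rewrite [X in _ <= X](bigID P) /=.
have -> : \sum_(i <- r | Q i && P i) F i = \sum_(i <- r | P i) F i.
  by apply: eq_bigl => i; case: (boolP (P i)) => [/PQ ->|]; rewrite ?andbF.
by rewrite lerDl sumr_ge0 // => i /andP[/F_ge0].
Qed.

Lemma big_ord_mem (R : nmodType) (M : nat) (s : seq nat) (P : pred nat)
    (F : nat -> R) :
  uniq s -> (forall c, c \in s -> c < M.+1)%N ->
  \sum_(i < M.+1 | (nat_of_ord i \in s) && P i) F i = \sum_(c <- s | P c) F c.
Proof.
move=> s_uniq s_small.
rewrite -(big_mkord (fun i => (i \in s) && P i)) -big_filter -[RHS]big_filter.
apply: perm_big; apply: uniq_perm; rewrite ?filter_uniq ?iota_uniq // => c.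
rewrite !mem_filter mem_index_iota andbC [P c && _]andbC -andbA.
by case: (boolP (c \in s)) => [/s_small ->|]; rewrite ?andbF.
Qed.

Section ProperWeight.

Variables (R : realType) (V : finType) (E : {set {set V}}).
Variables (sigma : V -> V -> nat -> nat) (L : V -> seq nat) (mu : V -> nat -> R).
Variable M : nat.

Hypothesis mu_ge0 : forall v c, c \in L v -> 0 <= mu v c.
Hypothesis sigma_vc : vertex_correspondence E sigma.
Hypothesis L_uniq : forall v, uniq (L v).
Hypothesis L_small : forall v c, c \in L v -> (c < M.+1)%N.

(* A colouring of U is encoded as a function into 'I_M.+1 (M bounds every
   listed colour) that is 0 outside U; colours outside L v get weight 0, so
   only colourings from the lists contribute. *)
Local Notation colouring := {ffun V -> 'I_M.+1}.

Implicit Types (U : {set V}) (u v w : V) (g : colouring) (i j : 'I_M.+1).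

Definition recolour (g : colouring) (u : V) (i : 'I_M.+1) : colouring :=
  [ffun x => if x == u then i else g x].

Definition colour_weight (v : V) (i : 'I_M.+1) : R :=
  if nat_of_ord i \in L v then mu v i else 0.

Definition supported (U : {set V}) (g : colouring) : bool :=
  [forall v, (v \notin U) ==> (g v == ord0)].

Definition proper_on (U : {set V}) (g : colouring) : bool :=
  [forall a, forall b,
     [&& a \in U, b \in U & adj E a b] ==> ~~ blocks sigma a (g a) b (g b)].

Definition weight (U : {set V}) (g : colouring) : R :=
  \prod_(v in U) colour_weight v (g v).

Definition proper_weight (U : {set V}) : R :=
  \sum_(g | supported U g && proper_on U g) weight U g.

Definition proper_weight_at (U : {set V}) (u : V) (i : 'I_M.+1) : R :=
  \sum_(g | supported U g && proper_on U g && (g u == i)) weight U g.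

Definition conflict_weight (U : {set V}) (u : V) (i : 'I_M.+1) : R :=
  \sum_(g | supported (U :\ u) g && proper_on (U :\ u) g
            && ~~ proper_on U (recolour g u i)) weight (U :\ u) g.

Lemma recolourE g u i v : recolour g u i v = if v == u then i else g v.
Proof. by rewrite ffunE. Qed.

Lemma recolour_recolour g u i j : recolour (recolour g u i) u j = recolour g u j.
Proof. by apply/ffunP => v; rewrite !recolourE; case: eqP. Qed.

Lemma recolour_id g u : recolour g u (g u) = g.
Proof. by apply/ffunP => v; rewrite recolourE; case: eqP => [->|]. Qed.

Lemma recolour_eq g u i : (recolour g u i == g) = (g u == i).
Proof.
apply/eqP/eqP => [<-|<-]; last exact: recolour_id.
by rewrite recolourE eqxx.
Qed.

Lemma colour_weight_ge0 v i : 0 <= colour_weight v i.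
Proof. by rewrite /colour_weight; case: ifP => // /mu_ge0. Qed.

Lemma weight_ge0 U g : 0 <= weight U g.
Proof. by apply: prodr_ge0 => v _; apply: colour_weight_ge0. Qed.

Lemma proper_weight_ge0 U : 0 <= proper_weight U.
Proof. by apply: sumr_ge0 => g _; apply: weight_ge0. Qed.

Lemma sum_colour_weight w (P : pred nat) :
  \sum_(j < M.+1 | P j) colour_weight w j = \sum_(c <- L w | P c) mu w c.
Proof.
rewrite -(big_ord_mem _ _ (L_uniq w) (L_small (v := w))) -big_mkcondr /=.
by apply: eq_bigl => j; rewrite andbC.
Qed.

Lemma proper_weight_set0 : proper_weight set0 = 1.
Proof.
rewrite /proper_weight (big_pred1 [ffun=> ord0]) ?/weight ?big_set0 // => g /=.
have -> : proper_on set0 g by apply/forallP => a; apply/forallP => b; rewrite in_set0.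
rewrite andbT; apply/forallP/eqP => [g0|-> v]; last by rewrite ffunE eqxx implybT.
by apply/ffunP => v; rewrite ffunE; apply/eqP; have := g0 v; rewrite in_set0.
Qed.

Lemma proper_weight_partition U u :
  proper_weight U = \sum_(i < M.+1) proper_weight_at U u i.
Proof. exact: (partition_big (fun g : colouring => g u) xpredT). Qed.

Lemma supported_setD1 U u g i : u \in U ->
  supported (U :\ u) g = supported U (recolour g u i) && (g u == ord0).
Proof.
move=> uU; apply/forallP/andP => [g0|[/forallP g0 gu] v].
  split; last by have := g0 u; rewrite setD11.
  apply/forallP => v; apply/implyP => vU; rewrite recolourE.
  have vu : v != u by apply: contraNneq vU => ->.
  by rewrite (negbTE vu); have := g0 v; rewrite in_setD1 vu vU.
rewrite in_setD1 negb_and negbK; apply/implyP.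
case: eqVneq => [-> _|vu /= vU]; first exact: gu.
by have := g0 v; rewrite recolourE (negbTE vu) vU.
Qed.

Lemma proper_on_recolour_setD1 U u g i :
  proper_on U (recolour g u i) -> proper_on (U :\ u) g.
Proof.
move=> /forallP proper_g; apply/forallP => a; apply/forallP => b.
apply/implyP; rewrite !in_setD1 => /and3P[/andP[au aU] /andP[bu bU] ab].
have := forallP (proper_g a) b; rewrite aU bU ab /= !recolourE.
by rewrite (negbTE au) (negbTE bu).
Qed.

Lemma weight_recolour U u g i : u \in U ->
  weight U (recolour g u i) = colour_weight u i * weight (U :\ u) g.
Proof.
move=> uU; rewrite /weight (bigD1 u) //= recolourE eqxx; congr (_ * _).
apply: eq_big => [v|v /andP[_ vu]]; first by rewrite in_setD1 andbC.
by rewrite recolourE (negbTE vu).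
Qed.

Lemma proper_weight_at_extend U u i : u \in U ->
  proper_weight_at U u i = colour_weight u i *
    \sum_(g | supported (U :\ u) g && proper_on (U :\ u) g
              && proper_on U (recolour g u i)) weight (U :\ u) g.
Proof.
move=> uU; rewrite /proper_weight_at mulr_sumr.
rewrite (reindex_onto (fun g => recolour g u i) (fun g => recolour g u ord0)); last first.
  by move=> g /andP[_ /eqP <-]; rewrite recolour_recolour recolour_id.
apply: eq_big => [g|g _]; last exact: weight_recolour.
rewrite recolourE !eqxx andbT recolour_recolour recolour_eq (supported_setD1 _ i uU).
case: (boolP (proper_on U (recolour g u i))) => [proper_g|]; last by rewrite !andbF.
by rewrite (proper_on_recolour_setD1 proper_g) !andbT.
Qed.

Lemma proper_weight_at_eq U u i : u \in U ->
  proper_weight_at U u i =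
    colour_weight u i * (proper_weight (U :\ u) - conflict_weight U u i).
Proof.
move=> uU; rewrite proper_weight_at_extend //; congr (_ * _).
rewrite /proper_weight /conflict_weight.
by rewrite [X in _ = X - _](bigID (fun g => proper_on U (recolour g u i))) addrK.
Qed.

Lemma proper_weight_at_le U u i : u \in U ->
  proper_weight_at U u i <= colour_weight u i * proper_weight (U :\ u).
Proof.
move=> uU; rewrite proper_weight_at_eq //.
apply: ler_wpM2l; first exact: colour_weight_ge0.
by rewrite gerBl; apply: sumr_ge0 => g _; apply: weight_ge0.
Qed.

Lemma blocking_neighbour U u g i :
  proper_on (U :\ u) g -> ~~ proper_on U (recolour g u i) ->
  exists2 w, (w \in U :\ u) && adj E w u & blocks sigma w (g w) u i.
Proof.
move=> proper_g improper.
case: (pickP (fun w => [&& w \in U :\ u, adj E w u & blocks sigma w (g w) u i]))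
  => [w /and3P[wU wu wb]|no_blocker]; first by exists w; rewrite ?wU.
case/negP: improper.
have unblocked w : w \in U :\ u -> adj E w u -> ~~ blocks sigma w (g w) u i.
  by move=> wU wu; have := no_blocker w; rewrite wU wu => /negbT.
apply/forallP => a; apply/forallP => b; apply/implyP => /and3P[aU bU ab].
rewrite !recolourE; case: (eqVneq a u) => [au|au]; case: (eqVneq b u) => [bu|bu].
- by move: ab; rewrite au bu adjxx.
- subst a; apply/negP => /eqP ub.
  have [_ sigmaK] := sigma_vc ab.
  have := unblocked b; rewrite in_setD1 bu bU adjC ab => /(_ isT isT).
  by rewrite /blocks -ub sigmaK eqxx.
- by subst b; apply: unblocked; rewrite // in_setD1 au aU.
- by have := forallP (forallP proper_g a) b; rewrite !in_setD1 au bu aU bU ab.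
Qed.

Lemma conflict_weight_union_bound U u i :
  conflict_weight U u i <=
    \sum_(w | (w \in U :\ u) && adj E w u)
       \sum_(j < M.+1 | blocks sigma w j u i) proper_weight_at (U :\ u) w j.
Proof.
pose A g := supported (U :\ u) g && proper_on (U :\ u) g.
pose W w := (w \in U :\ u) && adj E w u.
pose B w (j : nat) := blocks sigma w j u i.
have blocked_le g : A g && ~~ proper_on U (recolour g u i) ->
    weight (U :\ u) g <= \sum_(w | W w && B w (g w)) weight (U :\ u) g.
  case/andP=> /andP[_ proper_g] /(blocking_neighbour proper_g)[w Ww Bw].
  rewrite (bigD1 w) /=; last by rewrite /W Ww /B Bw.
  by rewrite lerDl sumr_ge0 // => *; apply: weight_ge0.
have by_blocker : \sum_(g | A g) \sum_(w | W w && B w (g w)) weight (U :\ u) g =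
    \sum_(w | W w) \sum_(j < M.+1 | B w j) proper_weight_at (U :\ u) w j.
  under eq_bigr do rewrite big_mkcondr /=.
  rewrite exchange_big /=; apply: eq_bigr => w _; rewrite -big_mkcondr /=.
  rewrite (partition_big (fun g : colouring => g w) (B w)) /=; last by move=> g /andP[].
  apply: eq_bigr => j Bj; apply: eq_bigl => g.
  by case: eqP => [->|]; rewrite ?andbF // Bj andbT.
rewrite /conflict_weight -/A -by_blocker.
apply: le_trans (ler_sum _ blocked_le) _.
apply: ler_sum_subpred => [g /andP[]//|g _].
by apply: sumr_ge0 => *; apply: weight_ge0.
Qed.

Lemma colouring_of_proper_weight_gt0 :
  0 < proper_weight [set: V] -> exists gamma : V -> nat, is_colouring E sigma L gamma.
Proof.
move/lt0r_neq0/eqP/psumr_neq0P => /(_ (fun g _ => weight_ge0 _ g)).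
case=> g /andP[/andP[_ proper_g] /lt0r_neq0 /prodf_neq0 weight_g].
exists (fun v => nat_of_ord (g v)); split=> [v|u v uv].
  by apply: contraNT (weight_g v (in_setT v)) => gv; rewrite /colour_weight (negbTE gv).
by have := forallP (forallP proper_g v) u; rewrite !in_setT adjC uv.
Qed.

Section Ratio.

Variables ell n : R.
Hypothesis ell_gt0 : 0 < ell.
Hypothesis ell_ge4n : 4 * n <= ell.
Hypothesis list_weight_ge : forall v, ell <= list_weight L mu v.
Hypothesis nbhd_weight_le : forall v c, c \in L v -> nbhd_weight E sigma L mu v c <= n.

Lemma conflict_weight_le U u i :
  (forall w, w \in U :\ u ->
     ell * proper_weight (U :\ u :\ w) <= 2 * proper_weight (U :\ u)) ->
  nat_of_ord i \in L u ->
  ell * conflict_weight U u i <= 2 * n * proper_weight (U :\ u).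
Proof.
move=> IH iL; set Z' := proper_weight (U :\ u).
pose S w := \sum_(c <- L w | blocks sigma w c u i) mu w c.
have S_ge0 w : 0 <= S w.
  by rewrite /S big_seq_cond sumr_ge0 // => c /andP[/mu_ge0].
have blocked_le w : w \in U :\ u ->
    ell * \sum_(j < M.+1 | blocks sigma w j u i) proper_weight_at (U :\ u) w j
    <= 2 * Z' * S w.
  move=> wU; rewrite /S -sum_colour_weight [ell * _]mulr_sumr [2 * Z' * _]mulr_sumr.
  apply: ler_sum => j _.
  apply: le_trans (_ : ell * (colour_weight w j * proper_weight (U :\ u :\ w)) <= _).
    exact/(ler_wpM2l (ltW ell_gt0))/proper_weight_at_le.
  rewrite mulrCA [X in _ <= X]mulrC.
  exact/(ler_wpM2l (colour_weight_ge0 w j))/IH.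
have neighbours_le : \sum_(w | (w \in U :\ u) && adj E w u) S w <= n.
  apply: le_trans (nbhd_weight_le iL).
  by apply: ler_sum_subpred => [w /andP[]|w _].
apply: le_trans (ler_wpM2l (ltW ell_gt0) (conflict_weight_union_bound U u i)) _.
rewrite mulr_sumr; apply: le_trans (_ : _ <= \sum_(w | (w \in U :\ u) && adj E w u)
                                        2 * Z' * S w) _.
  by apply: ler_sum => w /andP[wU _]; apply: blocked_le.
rewrite -mulr_sumr mulrAC.
by apply: ler_wpM2r; [apply: proper_weight_ge0 | apply: ler_wpM2l].
Qed.

Lemma proper_weight_ratio_step U u : u \in U ->
  (forall w, w \in U :\ u ->
     ell * proper_weight (U :\ u :\ w) <= 2 * proper_weight (U :\ u)) ->
  ell * proper_weight (U :\ u) <= 2 * proper_weight U.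
Proof.
move=> uU IH; set Z' := proper_weight (U :\ u).
have Z'_ge0 : 0 <= Z' by apply: proper_weight_ge0.
have extension_ge i : colour_weight u i * (Z' / 2) <= proper_weight_at U u i.
  rewrite proper_weight_at_eq // -/Z'.
  have [iL|iNL] := boolP (nat_of_ord i \in L u); last first.
    by rewrite /colour_weight (negbTE iNL) !mul0r.
  apply: ler_wpM2l; first exact: colour_weight_ge0.
  have conflict_le := conflict_weight_le IH iL; rewrite -/Z' in conflict_le.
  have scaled_ge4n := ler_wpM2r Z'_ge0 ell_ge4n.
  have : ell * conflict_weight U u i <= ell * (Z' / 2) by lra.
  by rewrite ler_pM2l // => half_le; lra.
have list_weightE : \sum_(j < M.+1) colour_weight u j = list_weight L mu u.
  exact: (sum_colour_weight u xpredT).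
rewrite (proper_weight_partition U u).
apply: le_trans (_ : _ <= 2 * \sum_(i < M.+1) colour_weight u i * (Z' / 2)) _.
  by rewrite -mulr_suml list_weightE; have := list_weight_ge u; nra.
by apply: ler_wpM2l => //; apply: ler_sum => i _; apply: extension_ge.
Qed.

Lemma proper_weight_ratio U u : u \in U ->
  ell * proper_weight (U :\ u) <= 2 * proper_weight U.
Proof.
have [m] := ubnP #|U|; elim: m U u => // m IH U u; rewrite ltnS => U_le uU.
apply: proper_weight_ratio_step => // w wU; apply: IH => //.
by rewrite (cardsD1 u) uU in U_le.
Qed.

Lemma proper_weight_gt0 U : 0 < proper_weight U.
Proof.
have [m] := ubnP #|U|; elim: m U => // m IH U; rewrite ltnS => U_le.
have [->|[u uU]] := set_0Vmem U; first by rewrite proper_weight_set0 ltr01.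
have Z'_gt0 : 0 < proper_weight (U :\ u).
  by apply: IH; rewrite (cardsD1 u) uU in U_le.
have := proper_weight_ratio uU; have := mulr_gt0 ell_gt0 Z'_gt0; lra.
Qed.

End Ratio.

End ProperWeight.

Theorem lemma7p1 (R : realType) (V : finType) (k : nat) (E : {set {set V}})
  (sigma : V -> V -> nat -> nat) (L : V -> seq nat) (mu : V -> nat -> R)
  (ell n : R) :
  uniform k E -> linear_hg E -> vertex_correspondence E sigma ->
  (forall v, uniq (L v)) ->
  (forall v c, c \in L v -> 0 <= mu v c <= 1) ->
  0 < ell -> 0 < n ->
  ell / n >= 3 * expR 1 ->
  (forall v, list_weight L mu v >= ell) ->
  (forall v c, c \in L v -> nbhd_weight E sigma L mu v c <= n) ->
  exists gamma : V -> nat, is_colouring E sigma L gamma.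
Proof.
move=> _ _ sigma_vc L_uniq mu_bounds ell_gt0 n_gt0 ratio list_weight_ge nbhd_le.
have mu_ge0 v c : c \in L v -> 0 <= mu v c by move=> /mu_bounds /andP[].
pose M := (\max_(v : V) \sum_(c <- L v) c)%N.
have L_small v c : c \in L v -> (c < M.+1)%N.
  move=> cL; rewrite ltnS (leq_trans _ (leq_bigmax v)) //.
  by rewrite (big_rem c cL) leq_addr.
have ell_ge4n : 4 * n <= ell.
  rewrite ler_pdivlMr // in ratio.
  have e_ge2 : 2 <= expR 1 :> R by have := @exp.expR_ge1Dx R 1; lra.
  have : 2 * n <= expR 1 * n by rewrite ler_pM2r.
  lra.
apply: (colouring_of_proper_weight_gt0 (M := M) mu_ge0).
exact: (proper_weight_gt0 mu_ge0 sigma_vc L_uniq L_small ell_gt0 ell_ge4n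
          list_weight_ge nbhd_le).
Qed.
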